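(* Let $\mathcal{H}$ be a complex Hilbert space and let $B,C\in\mathcal{B}(\mathcal{H})$ be self-adjoint. Then $$\max\left\{\|B+C\|^2,\|B-C\|^2\right\}\le\|B^2+C^2\|+2\,w(|B||C|).$$
   Context: $\mathcal{B}(\mathcal{H})$ is the algebra of bounded linear operators on $\mathcal{H}$ with operator norm $\|\cdot\|$. For $A\in\mathcal{B}(\mathcal{H})$, $|A|=(A^*A)^{1/2}$ and $w(A)=\sup_{\|x\|=1}|\langle Ax,x\rangle|$ is the numerical radius. *)

From HB Require Import structures.
From mathcomp Require Import all_boot all_order all_algebra.
From mathcomp Require Import classical_sets reals.
From mathcomp Require Import complex.
Set Implicit Arguments. Unset Strict Implicit. Unset Printing Implicit Defensive.
Import Order.TTheory GRing.Theory Num.Theory.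
Local Open Scope ring_scope.
Local Open Scope classical_set_scope.

Section Hilbert.
Variable R : realType.
Local Notation C := (R[i]).
Variable V : lmodType C.
Variable ip : V -> V -> C.

(* complex inner product: linear in the first argument, Hermitian, positive
   definite (0 <= z in C means z is a nonnegative real) *)
Definition is_inner_product : Prop :=
  [/\ forall (a : C) (x y z : V), ip (a *: x + y) z = a * ip x z + ip y z,
      forall x y : V, ip y x = Num.conj (ip x y),
      forall x : V, 0 <= ip x x
    & forall x : V, ip x x = 0 -> x = 0].

Definition hnorm (x : V) : R := Num.sqrt (@complex.Re R (ip x x)).

Definition cmod (z : C) : R := Num.sqrt (@complex.Re R z ^+ 2 + @complex.Im R z ^+ 2).

Definition complete_ip : Prop :=
  forall u : nat -> V,
    (forall e : R, 0 < e -> exists N, forall m n, (N <= m)%N -> (N <= n)%N ->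
        hnorm (u m - u n) < e) ->
    exists l : V, forall e : R, 0 < e -> exists N, forall n, (N <= n)%N ->
        hnorm (u n - l) < e.

Definition bounded_op (T : V -> V) : Prop :=
  (forall (a : C) (x y : V), T (a *: x + y) = a *: T x + T y) /\
  exists M : R, forall x, hnorm (T x) <= M * hnorm x.

Definition opnorm (T : V -> V) : R :=
  sup [set r : R | exists x : V, hnorm x <= 1 /\ r = hnorm (T x)].

Definition numrad (T : V -> V) : R :=
  sup [set r : R | exists x : V, hnorm x = 1 /\ r = cmod (ip (T x) x)].

Definition selfadjoint (T : V -> V) : Prop :=
  forall x y : V, ip (T x) y = ip x (T y).

(* P = |A| = (A^* A)^{1/2}: P is a bounded positive operator with
   P^2 = A^* A, i.e. <P (P x), y> = <A x, A y> for all x, y *)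
Definition is_abs (A P : V -> V) : Prop :=
  [/\ bounded_op P, forall x : V, 0 <= ip (P x) x
    & forall x y : V, ip (P (P x)) y = ip (A x) (A y)].

End Hilbert.

From HB Require Import structures.
From mathcomp Require Import all_boot all_order all_algebra.
From mathcomp Require Import boolp classical_sets reals.
From mathcomp Require Import complex.
From mathcomp Require Import ring lra.
Import Order.TTheory GRing.Theory Num.Theory.
Local Open Scope ring_scope.
Local Open Scope complex_scope.
Set Implicit Arguments. Unset Strict Implicit.

(* If T is symmetric and U is a positive operator with U^2 = T^2, then
      U commutes with T and |<T x, x>| <= <U x, x>.  Both facts rest on a
      descent in the spirit of Sz.-Nagy: for 0 <= A <= 1 the iteration
      A_(n+1) = A_n - A_n^2 (or v_(n+1) = v_n - A v_n) strictly decreases a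
      nonnegative quantity by ||A_n x||^2, so these norms become arbitrarily
      small (lemma descent_nonneg).
   2. With X = B + C and Y = |B| + |C| we get
      |<X z, z>| <= <Y z, z> <= ||Y z|| ||z||  and
      ||Y z||^2 = <(B^2 + C^2) z, z> + 2 Re <|B| z, |C| z>
               <= (||B^2 + C^2|| + 2 w(|B| |C|)) ||z||^2.
   3. For a symmetric X, the numerical-radius bound |<X z, z>| <= K ||z||^2
      gives ||X x|| <= K ||x|| by polarization. *)

Lemma discriminant_le (R : realFieldType) (a b c : R) : 0 <= c ->
  (forall t, 0 <= a + 2 * t * b + t ^+ 2 * c) -> b ^+ 2 <= a * c.
Proof.
move=> c0 h; have [cz|cp] := eqVneq c 0.
  have [bz|bn] := eqVneq b 0; first by rewrite bz cz expr0n /= mulr0.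
  have := h (- (a + 1) / (2 * b)); rewrite cz mulr0 addr0.
  have -> : 2 * (- (a + 1) / (2 * b)) * b = - (a + 1) by field.
  move=> hh; exfalso; lra.
have cpos : 0 < c by rewrite lt_def cp c0.
have := h (- b / c).
have e : - b / c * c = - b by field.
set t := - b / c in e * => ht.
have : 0 <= (a + t * b) * c.
  apply: mulr_ge0 c0.
  have e2 : t ^+ 2 * c = - (t * b) by rewrite expr2 -mulrA e mulrN.
  by move: ht; rewrite e2; lra.
rewrite mulrDl -mulrA (mulrC b c) mulrA e expr2; lra.
Qed.

(* If a nonnegative sequence f decreases at each step by at least a_n^2,
   then inf a_n = 0; hence a bound K >= - M a_n valid for all n forces
   K >= 0.  This is the limiting argument behind every descent below. *)
Lemma descent_nonneg (R : realType) (K M : R) (a f : nat -> R) :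
  (forall n, 0 <= f n) -> (forall n, f n.+1 <= f n - a n ^+ 2) ->
  (forall n, 0 <= a n) -> (forall n, - (M * a n) <= K) -> 0 <= K.
Proof.
move=> f0 fS a0 hK; rewrite leNgt; apply/negP => Kneg.
have Mpos : 0 < M.
  rewrite ltNge; apply/negP => Ml.
  have : M * a 0%N <= 0 by rewrite mulr_le0_ge0.
  by have := hK 0%N; lra.
set d := - K / M.
have dpos : 0 < d by rewrite /d divr_gt0 // oppr_gt0.
have ad2 n : d ^+ 2 <= a n ^+ 2.
  rewrite ler_sqr ?nnegrE ?(ltW dpos) //.
  by rewrite /d ler_pdivrMr // mulrC; have := hK n; lra.
have fn n : f n <= f 0%N - n%:R * d ^+ 2.
  elim: n => [|n IH]; first by rewrite mul0r subr0.
  by have := fS n; have := ad2 n; rewrite -natr1 mulrDl mul1r; lra.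
have d2 : 0 < d ^+ 2 by rewrite exprn_gt0.
set n := Num.Def.truncn (f 0%N / d ^+ 2).
have := truncnS_gt (f 0%N / d ^+ 2); rewrite -/n ltr_pdivrMr // => hn.
by have := fn n.+1; have := f0 n.+1; lra.
Qed.

Section InnerProduct.
Variable R : realType.
Variable V : lmodType R[i].
Variable ip : V -> V -> R[i].
Hypothesis hip : is_inner_product ip.

Local Notation nrm := (hnorm ip).

Definition rip (x y : V) : R := complex.Re (ip x y).

Lemma ip_linear a x y z : ip (a *: x + y) z = a * ip x z + ip y z.
Proof. by case: hip => h _ _ _; apply: h. Qed.
Lemma ip_hermitian x y : ip y x = conjc (ip x y).
Proof. by case: hip => _ h _ _; apply: h. Qed.
Lemma ip_self_ge0 x : 0 <= ip x x.
Proof. by case: hip => _ _ h _; apply: h. Qed.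
Lemma ip_self_eq0 x : ip x x = 0 -> x = 0.
Proof. by case: hip => _ _ _ h; apply: h. Qed.

Lemma ip0l z : ip 0 z = 0.
Proof.
have := ip_linear 1 0 0 z; rewrite scaler0 addr0 mul1r => h.
by rewrite -{1}[ip 0 z]addr0 in h; rewrite -(addrI _ h).
Qed.
Lemma ipDl x y z : ip (x + y) z = ip x z + ip y z.
Proof. by rewrite -[x]scale1r ip_linear mul1r scale1r. Qed.
Lemma ipZl a x z : ip (a *: x) z = a * ip x z.
Proof. by rewrite -[a *: x]addr0 ip_linear ip0l addr0. Qed.
Lemma ipNl x z : ip (- x) z = - ip x z.
Proof. by rewrite -scaleN1r ipZl mulN1r. Qed.
Lemma ipBl x y z : ip (x - y) z = ip x z - ip y z.
Proof. by rewrite ipDl ipNl. Qed.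
Lemma ipDr x y z : ip z (x + y) = ip z x + ip z y.
Proof. by rewrite ip_hermitian ipDl rmorphD /= -!ip_hermitian. Qed.
Lemma ipZr a x z : ip z (a *: x) = conjc a * ip z x.
Proof. by rewrite ip_hermitian ipZl rmorphM /= -ip_hermitian. Qed.
Lemma ipNr x z : ip z (- x) = - ip z x.
Proof. by rewrite ip_hermitian ipNl rmorphN /= -ip_hermitian. Qed.

Lemma Re_conj (w : R[i]) : complex.Re (conjc w) = complex.Re w.
Proof. by case: w. Qed.
Lemma Re_add (a b : R[i]) : complex.Re (a + b) = complex.Re a + complex.Re b.
Proof. by case: a; case: b. Qed.
Lemma Re_opp (a : R[i]) : complex.Re (- a) = - complex.Re a.
Proof. by case: a. Qed.
Lemma Re_realM (t : R) (a : R[i]) : complex.Re (t%:C * a) = t * complex.Re a.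
Proof. by case: a => a b /=; rewrite mul0r subr0. Qed.

Lemma ripC x y : rip x y = rip y x.
Proof. by rewrite /rip ip_hermitian Re_conj. Qed.
Lemma ripDl x y z : rip (x + y) z = rip x z + rip y z.
Proof. by rewrite /rip ipDl Re_add. Qed.
Lemma ripDr x y z : rip z (x + y) = rip z x + rip z y.
Proof. by rewrite ripC ripDl ripC (ripC y). Qed.
Lemma ripNl x z : rip (- x) z = - rip x z.
Proof. by rewrite /rip ipNl Re_opp. Qed.
Lemma ripNr x z : rip z (- x) = - rip z x.
Proof. by rewrite ripC ripNl ripC. Qed.
Lemma ripBl x y z : rip (x - y) z = rip x z - rip y z.
Proof. by rewrite ripDl ripNl. Qed.
Lemma ripBr x y z : rip z (x - y) = rip z x - rip z y.
Proof. by rewrite ripDr ripNr. Qed.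
Lemma ripZl (t : R) x z : rip (t%:C *: x) z = t * rip x z.
Proof. by rewrite /rip ipZl Re_realM. Qed.
Lemma ripZr (t : R) x z : rip z (t%:C *: x) = t * rip z x.
Proof. by rewrite ripC ripZl ripC. Qed.
Lemma rip0r z : rip z 0 = 0.
Proof. by rewrite ripC /rip ip0l. Qed.

Lemma ip_selfE x : ip x x = (rip x x)%:C.
Proof.
have := ip_self_ge0 x; rewrite /rip; case: (ip x x) => a b.
by rewrite lecE /= => /andP[/eqP -> _].
Qed.
Lemma rip_ge0 x : 0 <= rip x x.
Proof. by have := ip_self_ge0 x; rewrite ip_selfE lecR. Qed.
Lemma rip_eq0 x : rip x x = 0 -> x = 0.
Proof. by move=> h; apply: ip_self_eq0; rewrite ip_selfE h. Qed.

Lemma hnormE x : nrm x = Num.sqrt (rip x x).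
Proof. by []. Qed.
Lemma hnorm_ge0 x : 0 <= nrm x.
Proof. exact: sqrtr_ge0. Qed.
Lemma hnorm2 x : nrm x ^+ 2 = rip x x.
Proof. by rewrite hnormE sqr_sqrtr // rip_ge0. Qed.
Lemma hnorm0 : nrm 0 = 0.
Proof. by rewrite hnormE rip0r sqrtr0. Qed.

Definition linop (T : V -> V) :=
  forall (a : R[i]) x y, T (a *: x + y) = a *: T x + T y.
Definition symmetric_op (T : V -> V) := forall x y, rip (T x) y = rip x (T y).
Definition positive_op (T : V -> V) := forall x, 0 <= rip (T x) x.
Definition form_le (T : V -> V) (c : R) := forall x, rip (T x) x <= c * rip x x.

Section LinearOperator.
Variable T : V -> V.
Hypothesis lT : linop T.
Lemma lin0 : T 0 = 0.
Proof.
have := lT 1 0 0; rewrite scaler0 addr0 scale1r => h.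
by rewrite -{1}[T 0]addr0 in h; rewrite -(addrI _ h).
Qed.
Lemma linD x y : T (x + y) = T x + T y.
Proof. by rewrite -{1}[x]scale1r lT scale1r. Qed.
Lemma linZ a x : T (a *: x) = a *: T x.
Proof. by rewrite -[a *: x]addr0 lT lin0 addr0. Qed.
Lemma linN x : T (- x) = - T x.
Proof. by rewrite -scaleN1r linZ scaleN1r. Qed.
Lemma linB x y : T (x - y) = T x - T y.
Proof. by rewrite linD linN. Qed.
End LinearOperator.

Lemma linop_comp S T : linop S -> linop T -> linop (fun x => S (T x)).
Proof. by move=> hS hT a x y; rewrite hT hS. Qed.
Lemma linop_add S T : linop S -> linop T -> linop (fun x => S x + T x).
Proof.
move=> hS hT a x y; rewrite hS hT scalerDr.
by rewrite -!addrA; congr (_ + _); rewrite addrCA.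
Qed.
Lemma linop_opp S : linop S -> linop (fun x => - S x).
Proof. by move=> hS a x y; rewrite hS opprD scalerN. Qed.
Lemma linop_sub S T : linop S -> linop T -> linop (fun x => S x - T x).
Proof. by move=> hS hT; apply: linop_add => //; apply: linop_opp. Qed.

Lemma symmetric_opp T : symmetric_op T -> symmetric_op (fun x => - T x).
Proof. by move=> sT u v; rewrite ripNl ripNr sT. Qed.

Lemma positive_cs T : linop T -> symmetric_op T -> positive_op T ->
  forall x y, rip (T x) y ^+ 2 <= rip (T x) x * rip (T y) y.
Proof.
move=> hT sT pT x y; apply: discriminant_le; first exact: pT.
move=> t; have := pT (x + t%:C *: y).
rewrite linD // linZ // !ripDl !ripDr !ripZl !ripZr.
have -> : rip (T y) x = rip (T x) y by rewrite sT ripC.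
by rewrite expr2; lra.
Qed.

Lemma cs_abs x y : `|rip x y| <= nrm x * nrm y.
Proof.
have cs := @positive_cs id (fun _ _ _ => erefl) (fun _ _ => erefl) rip_ge0 x y.
rewrite !hnormE -sqrtrM ?rip_ge0 // -sqrtr_sqr.
exact: ler_wsqrtr.
Qed.
Lemma cs_le x y : rip x y <= nrm x * nrm y.
Proof. exact: le_trans (ler_norm _) (cs_abs x y). Qed.
Lemma cs_ge x y : - (nrm x * nrm y) <= rip x y.
Proof. by have := cs_abs x y; rewrite ler_norml => /andP[]. Qed.

Lemma sq_le_contraction T : linop T -> symmetric_op T -> positive_op T ->
  form_le T 1 -> forall x, rip (T x) (T x) <= rip (T x) x.
Proof.
move=> hT sT pT lT x.
have h := positive_cs hT sT pT x (T x).
have h1 := lT (T x); rewrite mul1r in h1.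
have h2 := pT x; have h3 := rip_ge0 (T x); have h4 := pT (T x).
set u := rip (T x) (T x) in h h1 h3 *.
set v := rip (T x) x in h h2 *.
set w := rip (T (T x)) (T x) in h h1 h4 *.
have : u ^+ 2 <= v * u by apply: le_trans h _; rewrite ler_wpM2l.
by rewrite expr2 => hh; nra.
Qed.

Section NagyDescent.
Variable A : V -> V.
Hypotheses (lA : linop A) (sA : symmetric_op A) (pA : positive_op A)
  (oA : form_le A 1).

Fixpoint nagy_seq (n : nat) : V -> V :=
  match n with 0 => A | n.+1 => fun x => nagy_seq n x - nagy_seq n (nagy_seq n x) end.

Lemma nagy_seq_contraction n :
  [/\ linop (nagy_seq n), symmetric_op (nagy_seq n), positive_op (nagy_seq n)
    & form_le (nagy_seq n) 1].
Proof.
elim: n => [|n [l s p o]] /=; first by [].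
have sq := sq_le_contraction l s p o.
split.
- by apply: linop_sub => //; apply: linop_comp.
- by move=> x y; rewrite ripBl ripBr !s.
- by move=> x; rewrite ripBl (s (nagy_seq n x) x); have := sq x; lra.
- move=> x; rewrite ripBl (s (nagy_seq n x) x) mul1r.
  by have := o x; have := rip_ge0 (nagy_seq n x); rewrite mul1r; lra.
Qed.

Variable S : V -> V.
Hypotheses (lS : linop S) (sS : symmetric_op S) (pS : positive_op S)
  (cS : forall x, S (A x) = A (S x)).

Lemma nagy_seq_comm n x : S (nagy_seq n x) = nagy_seq n (S x).
Proof.
elim: n x => [|n IH] x /=; first exact: cS.
by rewrite linB // !IH.
Qed.

Lemma positive_comm_mul x : 0 <= rip (S (A x)) x.
Proof.
(* <S A_n x, x> decreases along the sequence, while <A_n x, x> decreases by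
   ||A_n x||^2 at each step, so <S A x, x> >= - ||S x|| ||A_n x|| -> 0. *)
have decr n : rip (S (nagy_seq n x)) x <= rip (S (A x)) x.
  elim: n => [|n IH] //=; apply: le_trans IH.
  have [l s p o] := nagy_seq_contraction n.
  have e : rip (S (nagy_seq n (nagy_seq n x))) x
         = rip (S (nagy_seq n x)) (nagy_seq n x).
    by rewrite nagy_seq_comm (s (S (nagy_seq n x)) x).
  by rewrite linB // ripBl e; have := pS (nagy_seq n x); lra.
apply: (descent_nonneg (M := nrm (S x)) (a := fun n => nrm (nagy_seq n x))
  (f := fun n => rip (nagy_seq n x) x)).
- by move=> n; have [l s p o] := nagy_seq_contraction n; apply: p.
- move=> n; rewrite /= hnorm2 ripBl.
  by have [l s p o] := nagy_seq_contraction n; rewrite (s (nagy_seq n x) x).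
- by move=> n; apply: hnorm_ge0.
- move=> n; apply: le_trans (decr n).
  by rewrite sS mulrC; apply: cs_ge.
Qed.
End NagyDescent.

Section Normalize.
Variable P : V -> V.
Hypotheses (lP : linop P) (sP : symmetric_op P) (pP : positive_op P).
Variable c : R.
Hypotheses (c0 : 0 < c) (bP : form_le P c).

Definition normalized x := (c^-1)%:C *: P x.

Lemma normalized_contraction : [/\ linop normalized, symmetric_op normalized,
  positive_op normalized & form_le normalized 1].
Proof.
split.
- by move=> a x y; rewrite /normalized lP scalerDr !scalerA mulrC.
- by move=> x y; rewrite /normalized ripZl ripZr sP.
- by move=> x; rewrite /normalized ripZl mulr_ge0 // invr_ge0 ltW.
- by move=> x; rewrite /normalized ripZl mul1r ler_pdivrMl //; exact: bP.
Qed.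

Lemma normalizedK x : P x = c%:C *: normalized x.
Proof.
by rewrite /normalized scalerA -rmorphM /= mulfV ?gt_eqF // scale1r.
Qed.
End Normalize.

Section AbsoluteValue.
Variables T U : V -> V.
Hypotheses (lT : linop T) (sT : symmetric_op T).
Hypotheses (lU : linop U) (sU : symmetric_op U) (pU : positive_op U).
Variable c : R.
Hypotheses (c0 : 0 < c) (bU : form_le U c).
Hypothesis UUTT : forall x, U (U x) = T (T x).

Let A := normalized U c.
Let contrA : [/\ linop A, symmetric_op A, positive_op A & form_le A 1] :=
  normalized_contraction lU sU pU c0 bU.

Let D x := U (T x) - T (U x).
Let W x := U (D x).

Let lW : linop W.
Proof. by apply: linop_comp => //; apply: linop_sub; apply: linop_comp. Qed.

Let sW : symmetric_op W.
Proof.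
move=> x y; rewrite /W /D !linB // !ripBl !ripBr.
have e1 : rip (U (U (T x))) y = rip x (U (U (T y))) by rewrite sU sU sT !UUTT.
have e2 : rip (U (T (U x))) y = rip x (U (T (U y))) by rewrite sU sT sU.
by rewrite e1 e2.
Qed.

Let W_anticomm x : W (U x) = - U (W x).
Proof. by rewrite /W /D /= !(linB lU) (UUTT x) (UUTT (T x)) opprB. Qed.

(* W^2 is positive and commutes with U, so Nagy's lemma makes W^2 U
   positive; but <W^2 U u, u> = - <U W u, W u>, forcing U W = 0, then
   W = 0, then T D = 0, and finally D = 0. *)
Lemma abs_comm x : U (T x) = T (U x).
Proof.
pose S x := W (W x).
have [lA sA pA oA] := contrA.
have lS : linop S by apply: linop_comp.
have sS : symmetric_op S by move=> u v; rewrite /S sW sW.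
have pS : positive_op S by move=> u; rewrite /S sW; apply: rip_ge0.
have cS u : S (A u) = A (S u).
  by rewrite /S /A /normalized !(linZ lW) W_anticomm (linN lW) W_anticomm opprK.
have UW_form u : rip (U (W u)) (W u) = 0.
  apply/eqP; rewrite eq_le pU andbT.
  have := positive_comm_mul lA sA pA oA lS sS pS cS u.
  rewrite /S /A /normalized !(linZ lW) ripZl W_anticomm (linN lW) ripNl.
  by rewrite sW pmulr_rge0 ?invr_gt0 // oppr_ge0.
have UW0 u : U (W u) = 0.
  apply: rip_eq0; have h := positive_cs lU sU pU (W u) (U (W u)).
  rewrite UW_form mul0r in h.
  by apply/eqP; rewrite -sqrf_eq0 eq_le h sqr_ge0.
have W0 u : W u = 0 by apply: rip_eq0; rewrite {1}/W sU UW0 rip0r.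
have TD0 u : T (D u) = 0.
  by apply: rip_eq0; rewrite sT -UUTT -/(W u) UW0 rip0r.
apply/eqP; rewrite -subr_eq0; apply/eqP; apply: rip_eq0.
by rewrite -/(D x) {1}/D ripBl sT sU -/(W x) W0 TD0 !rip0r subrr.
Qed.

(* G = U + T satisfies G^2 = 2 U G, and the vectors v_n obtained from x by
   v_(n+1) = v_n - A v_n (A = U / c) exhaust x: x - v_n lies in the range
   of A, on which the form of G is nonnegative, while ||A v_n|| -> 0. *)
Let G x := U x + T x.
Let lG : linop G. Proof. exact: linop_add. Qed.
Let sG : symmetric_op G.
Proof. by move=> x y; rewrite /G ripDl ripDr sU sT. Qed.

Let GG x : G (G x) = U (G x) + U (G x).
Proof.
by rewrite /G (linD lU) (linD lT) -abs_comm -UUTT [U (T x) + _]addrC.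
Qed.

Let GU x : G (U x) = U (G x).
Proof. by rewrite /G (linD lU) abs_comm. Qed.

Let G_range_ge0 y : 0 <= rip (G (A y)) (A y).
Proof.
have GU_ge0 : 0 <= rip (G (U y)) (U y).
  have h : rip (G (G y)) (U y) = 2 * rip (G (U y)) (U y).
    by rewrite GG ripDl GU mulr2n mulrDl mul1r.
  have h2 : rip (G (G y)) (U y) = rip (U (G y)) (G y) by rewrite sG GU ripC.
  by have := pU (G y); rewrite -h2 h pmulr_rge0.
have ci : 0 <= c^-1 by rewrite invr_ge0 ltW.
by rewrite /A /normalized (linZ lG) ripZl ripZr !mulr_ge0.
Qed.

Let G_norm_le v : nrm (G v) <= 2 * c * nrm (A v).
Proof.
have h : nrm (G v) ^+ 2 <= 2 * c * (nrm (G v) * nrm (A v)).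
  rewrite hnorm2 -sG GG ripDl sU (normalizedK U c0 v) ripZr.
  have := cs_le (G v) (A v).
  have : c * rip (G v) (A v) <= c * (nrm (G v) * nrm (A v)).
    by rewrite ler_pM2l // cs_le.
  lra.
have := hnorm_ge0 (G v); have := hnorm_ge0 (A v).
set g := nrm (G v) in h *; set q := nrm (A v) in h * => q0 g0.
have [gz|gn] := eqVneq g 0; first by rewrite gz !mulr_ge0 // ltW.
have gp : 0 < g by rewrite lt_def gn g0.
rewrite -(ler_pM2l gp); apply: le_trans h _.
by rewrite (_ : 2 * c * (g * q) = g * (2 * c * q)) //; ring.
Qed.

Fixpoint rest (x : V) n := match n with 0 => x | n.+1 => rest x n - A (rest x n) end.
Fixpoint absorbed (x : V) n :=
  match n with 0 => 0 | n.+1 => absorbed x n + rest x n end.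

Lemma rest_absorbed x n : x - rest x n = A (absorbed x n).
Proof.
have [lA _ _ _] := contrA.
elim: n => [|n IH] /=; first by rewrite subrr (lin0 lA).
by rewrite (linD lA) -IH opprD opprK addrA.
Qed.

Lemma rest_decr x n :
  rip (rest x n.+1) (rest x n.+1) <= rip (rest x n) (rest x n) - nrm (A (rest x n)) ^+ 2.
Proof.
have [lA sA pA oA] := contrA.
rewrite /= hnorm2 !ripBl !ripBr (ripC (rest x n) (A _)).
by have := sq_le_contraction lA sA pA oA (rest x n); lra.
Qed.

Lemma rest_norm_le x n : nrm (rest x n) <= nrm x.
Proof.
suff h : rip (rest x n) (rest x n) <= rip x x by rewrite !hnormE ler_wsqrtr.
elim: n => [|n IH] //; apply: le_trans IH; apply: le_trans (rest_decr x n) _.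
by rewrite lerBlDr lerDl sqr_ge0.
Qed.

Lemma abs_sum_ge0 x : 0 <= rip (U x) x + rip (T x) x.
Proof.
rewrite -ripDl -/(G x).
apply: (descent_nonneg (M := 6 * c * nrm x) (a := fun n => nrm (A (rest x n)))
  (f := fun n => rip (rest x n) (rest x n))).
- by move=> n; apply: rip_ge0.
- exact: rest_decr.
- by move=> n; apply: hnorm_ge0.
move=> n; set v := rest x n; set u := x - v.
have e : rip (G x) x = rip (G u) u + 2 * rip (G v) x - rip (G v) v.
  rewrite /u (linB lG) !ripBl !ripBr.
  have : rip (G x) v = rip (G v) x by rewrite sG ripC.
  lra.
have pu : 0 <= rip (G u) u by rewrite /u rest_absorbed; exact: G_range_ge0.
have h1 := cs_ge (G v) x; have h2 := cs_le (G v) v.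
have h3 := rest_norm_le x n; rewrite -/v in h3.
have h4 := G_norm_le v.
have n0 := hnorm_ge0 x; have n1 := hnorm_ge0 v; have n2 := hnorm_ge0 (G v).
have n3 := hnorm_ge0 (A v).
have h5 : nrm (G v) * nrm v <= nrm (G v) * nrm x by rewrite ler_wpM2l.
have h6 : nrm (G v) * nrm x <= 2 * c * nrm (A v) * nrm x by rewrite ler_wpM2r.
rewrite e; nra.
Qed.
End AbsoluteValue.

Lemma abs_form_le T U c : linop T -> symmetric_op T ->
  linop U -> symmetric_op U -> positive_op U -> 0 < c -> form_le U c ->
  (forall x, U (U x) = T (T x)) -> forall x, `|rip (T x) x| <= rip (U x) x.
Proof.
move=> lT sT lU sU pU c0 bU UUTT x.
have h1 := abs_sum_ge0 lT sT lU sU pU c0 bU UUTT x.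
have UU' y : U (U y) = - T (- T y) by rewrite (linN lT) opprK.
have h2 := abs_sum_ge0 (linop_opp lT) (symmetric_opp sT) lU sU pU c0 bU UU' x.
rewrite ripNl in h2.
by rewrite ler_norml; apply/andP; split; lra.
Qed.

(* For symmetric X, a bound |<X z, z>| <= K ||z||^2 on the numerical range
   bounds the norm, ||X x||^2 <= K^2 ||x||^2, by polarization: the identity
   <X(x+y), x+y> - <X(x-y), x-y> = 4 <X x, y> with y = t X x gives a
   quadratic inequality in t, evaluated at t = 1 / K. *)
Lemma symmetric_norm_le X K : linop X -> symmetric_op X -> 0 <= K ->
  (forall z, `|rip (X z) z| <= K * rip z z) ->
  forall x, rip (X x) (X x) <= K ^+ 2 * rip x x.
Proof.
move=> lX sX K0 hX x; set u := X x.
have pol t : 4 * t * rip u u <= K * (2 * rip x x + 2 * (t ^+ 2 * rip u u)).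
  set y := t%:C *: u.
  have e1 : rip (X (x + y)) (x + y) - rip (X (x - y)) (x - y) = 4 * rip u y.
    rewrite (linD lX) (linB lX) !ripDl !ripDr ?ripNl ?ripNr.
    have : rip (X y) x = rip u y by rewrite sX ripC.
    by rewrite -/u; lra.
  have e2 : rip (x + y) (x + y) + rip (x - y) (x - y) = 2 * rip x x + 2 * rip y y.
    by rewrite !ripDl !ripDr ?ripNl ?ripNr; lra.
  have e3 : rip u y = t * rip u u by rewrite /y ripZr.
  have e4 : rip y y = t ^+ 2 * rip u u by rewrite /y ripZl ripZr mulrA expr2.
  have h1 := hX (x + y); have h2 := hX (x - y).
  move: h1 h2; rewrite !ler_norml => /andP[_ h1] /andP[h2 _].
  by rewrite -e4 -e2 mulrDr -mulrA -e3 -e1; lra.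
have u0 := rip_ge0 u; have x0 := rip_ge0 x.
have [Kz|Kn] := eqVneq K 0.
  by rewrite Kz expr0n mul0r; have := pol 1; rewrite Kz mul0r mulr1; lra.
have Kp : 0 < K by rewrite lt_def Kn K0.
have e1 : K * (4 * K^-1 * rip u u) = 4 * rip u u by field.
have e2 : K * (K * (2 * rip x x + 2 * (K^-1 ^+ 2 * rip u u)))
          = 2 * (K ^+ 2 * rip x x) + 2 * rip u u by field.
by have := ler_wpM2l (ltW Kp) (pol K^-1); rewrite e1 e2; lra.
Qed.

Lemma form_le_of_norm Y L : 0 <= L ->
  (forall z, rip (Y z) (Y z) <= L * rip z z) -> form_le Y (Num.sqrt L).
Proof.
move=> L0 hY z; apply: le_trans (cs_le _ _) _.
rewrite -(hnorm2 z) expr2 mulrA ler_wpM2r ?hnorm_ge0 //.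
rewrite hnormE -sqrtrM // -hnorm2 hnormE ler_wsqrtr //.
by rewrite -hnormE hnorm2; apply: hY.
Qed.

Section SumEstimate.
Variables B C P Q : V -> V.
Hypotheses (lB : linop B) (sB : symmetric_op B) (lC : linop C) (sC : symmetric_op C).
Hypotheses (lP : linop P) (sP : symmetric_op P) (pP : positive_op P).
Hypotheses (lQ : linop Q) (sQ : symmetric_op Q) (pQ : positive_op Q).
Variables cP cQ : R.
Hypotheses (cP0 : 0 < cP) (bP : form_le P cP) (cQ0 : 0 < cQ) (bQ : form_le Q cQ).
Hypotheses (PPBB : forall x, P (P x) = B (B x)) (QQCC : forall x, Q (Q x) = C (C x)).
Variables N w : R.
Hypotheses (N0 : 0 <= N) (w0 : 0 <= w).
Hypothesis hN : form_le (fun z => B (B z) + C (C z)) N.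
Hypothesis hw : forall z, rip (P z) (Q z) <= w * rip z z.

(* ||(P + Q) z||^2 = <(B^2 + C^2) z, z> + 2 rip (P z) (Q z) *)
Lemma abs_sum_norm_le z : rip (P z + Q z) (P z + Q z) <= (N + 2 * w) * rip z z.
Proof.
rewrite !ripDl !ripDr (ripC (Q z) (P z)) -(sP (P z)) -(sQ (Q z)) PPBB QQCC.
by have := hN z; rewrite ripDl /=; have := hw z; lra.
Qed.

(* |<(B + C) z, z>| <= <(P + Q) z, z> <= sqrt (N + 2 w) ||z||^2, then
   polarization. *)
Lemma sum_norm_le x : rip (B x + C x) (B x + C x) <= (N + 2 * w) * rip x x.
Proof.
have L0 : 0 <= N + 2 * w by rewrite addr_ge0 // mulr_ge0.
rewrite -(sqr_sqrtr L0).
apply: (@symmetric_norm_le (fun z => B z + C z)); rewrite ?sqrtr_ge0 //.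
- exact: linop_add.
- by move=> u v; rewrite ripDl ripDr sB sC.
move=> z; apply: le_trans (form_le_of_norm L0 abs_sum_norm_le z).
rewrite ripDl; apply: le_trans (ler_normD _ _) _; rewrite ripDl.
by apply: lerD; [apply: (abs_form_le _ _ _ _ _ cP0) | apply: (abs_form_le _ _ _ _ _ cQ0)].
Qed.
End SumEstimate.

Definition norm_bounded (T : V -> V) := exists M : R, forall x, nrm (T x) <= M * nrm x.

Lemma hnorm_triangle u v : nrm (u + v) <= nrm u + nrm v.
Proof.
have h0 : 0 <= nrm u + nrm v by rewrite addr_ge0 ?hnorm_ge0.
rewrite -(ger0_norm h0) -sqrtr_sqr hnormE ler_wsqrtr //.
rewrite ripDl !ripDr sqrrD -!hnorm2 (ripC v u).
by have := cs_le u v; lra.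
Qed.

Lemma hnormN u : nrm (- u) = nrm u.
Proof. by rewrite !hnormE ripNl ripNr opprK. Qed.

Lemma norm_bounded_ge0 T : norm_bounded T ->
  exists M, 0 <= M /\ forall x, nrm (T x) <= M * nrm x.
Proof.
case=> M hM; exists (Num.max M 0); split; first by rewrite le_max lexx orbT.
move=> x; apply: le_trans (hM x) _; rewrite ler_wpM2r ?hnorm_ge0 //.
by rewrite le_max lexx.
Qed.

Lemma norm_bounded_comp S T : norm_bounded S -> norm_bounded T ->
  norm_bounded (fun x => S (T x)).
Proof.
move=> /norm_bounded_ge0 [M [M0 hM]] /norm_bounded_ge0 [N [N0 hN]].
by exists (M * N) => x; apply: le_trans (hM _) _; rewrite -mulrA ler_wpM2l.
Qed.

Lemma norm_bounded_add S T : norm_bounded S -> norm_bounded T ->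
  norm_bounded (fun x => S x + T x).
Proof.
move=> /norm_bounded_ge0 [M [M0 hM]] /norm_bounded_ge0 [N [N0 hN]].
exists (M + N) => x; apply: le_trans (hnorm_triangle _ _) _.
by rewrite mulrDl; exact: lerD.
Qed.

Lemma form_le_of_bounded T : norm_bounded T -> exists c, 0 < c /\ form_le T c.
Proof.
case=> M hM; exists (Num.max M 1); split; first by rewrite lt_max ltr01 orbT.
move=> x; apply: le_trans (cs_le _ _) _.
rewrite -hnorm2 expr2 mulrA ler_wpM2r ?hnorm_ge0 //.
apply: le_trans (hM x) _; rewrite ler_wpM2r ?hnorm_ge0 //.
by rewrite le_max lexx.
Qed.

Lemma bound_of_sphere (f : V -> R) (M : R) :
  (forall (s : R) z, f (s%:C *: z) = s ^+ 2 * f z) ->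
  (forall z, nrm z = 1 -> f z <= M) -> forall z, f z <= M * rip z z.
Proof.
move=> hf hM z; have [z0|zn] := eqVneq (rip z z) 0.
  rewrite z0 mulr0 (rip_eq0 z0) -(scale0r 0) -[0 : R[i]]/((0:R)%:C) hf.
  by rewrite expr0n /= mul0r.
have zp : 0 < rip z z by rewrite lt_def zn rip_ge0.
set t := nrm z.
have tp : 0 < t by rewrite /t hnormE sqrtr_gt0.
have t2 : t ^+ 2 = rip z z by rewrite /t hnorm2.
have unit : nrm ((t^-1)%:C *: z) = 1.
  rewrite hnormE ripZl ripZr -t2 mulrA -expr2 exprVn mulVf ?sqrtr1 //.
  by rewrite expf_eq0 gt_eqF.
have := hM _ unit; rewrite hf exprVn -t2 ler_pdivrMl ?exprn_gt0 //.
by rewrite mulrC.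
Qed.

Lemma opnorm_ub T : norm_bounded T -> forall z, nrm z <= 1 -> nrm (T z) <= opnorm ip T.
Proof.
case=> M hM z hz; apply: ub_le_sup; last by exists z.
exists `|M| => r [x [hx ->]].
apply: le_trans (hM x) _; apply: le_trans (ler_norm _) _.
by rewrite normrM (ger0_norm (hnorm_ge0 x)) ler_piMr.
Qed.

Lemma opnorm_ge0 T : norm_bounded T -> 0 <= opnorm ip T.
Proof.
move=> hT; apply: le_trans (opnorm_ub hT (z := 0) _); first exact: hnorm_ge0.
by rewrite hnorm0.
Qed.

Lemma opnorm_form_le T : linop T -> norm_bounded T -> form_le T (opnorm ip T).
Proof.
move=> lT bT; apply: bound_of_sphere.
  by move=> s z; rewrite linZ // ripZl ripZr mulrA expr2.
move=> z hz; apply: le_trans (cs_le _ _) _; rewrite hz mulr1.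
by apply: opnorm_ub; rewrite ?hz.
Qed.

Lemma opnorm_sq_le T L : 0 <= L ->
  (forall x, rip (T x) (T x) <= L * rip x x) -> opnorm ip T ^+ 2 <= L.
Proof.
move=> L0 hT.
have ub r : (exists x, nrm x <= 1 /\ r = nrm (T x)) -> r <= Num.sqrt L.
  case=> x [hx ->]; rewrite -(ger0_norm (hnorm_ge0 (T x))) -sqrtr_sqr.
  apply: ler_wsqrtr; rewrite hnorm2; apply: le_trans (hT x) _.
  by rewrite ler_piMr // -hnorm2 expr_le1 // hnorm_ge0.
have inS : exists x, nrm x <= 1 /\ nrm (T 0) = nrm (T x).
  by exists 0; rewrite hnorm0.
have le_sqrt : opnorm ip T <= Num.sqrt L by apply: ge_sup => //; exists (nrm (T 0)).
have ge0 : 0 <= opnorm ip T.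
  apply: le_trans (hnorm_ge0 (T 0)) _; apply: ub_le_sup inS.
  by exists (Num.sqrt L).
by rewrite -(sqr_sqrtr L0) ler_sqr ?nnegrE ?sqrtr_ge0.
Qed.

Lemma Re_le_cmod (z : R[i]) : complex.Re z <= cmod z.
Proof.
rewrite /cmod; apply: le_trans (ler_norm _) _.
by rewrite -sqrtr_sqr ler_wsqrtr // lerDl sqr_ge0.
Qed.

Lemma cmod_le_Re_Im (a : R[i]) : cmod a <= `|complex.Re a| + `|complex.Im a|.
Proof.
rewrite /cmod; set p := complex.Re a; set q := complex.Im a.
have e : `|p| + `|q| = Num.sqrt ((`|p| + `|q|) ^+ 2).
  by rewrite sqrtr_sqr (ger0_norm (addr_ge0 (normr_ge0 p) (normr_ge0 q))).
rewrite e; apply: ler_wsqrtr.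
have hp : p ^+ 2 = `|p| ^+ 2 by rewrite real_normK // num_real.
have hq : q ^+ 2 = `|q| ^+ 2 by rewrite real_normK // num_real.
rewrite hp hq sqrrD.
have : 0 <= `|p| * `|q| *+ 2 by rewrite mulrn_wge0 // mulr_ge0.
lra.
Qed.

(* |<a, b>| <= 2 ||a|| ||b||, bounding real and imaginary parts separately;
   enough to see that the numerical range is bounded. *)
Lemma cmod_ip_le a b : cmod (ip a b) <= 2 * (nrm a * nrm b).
Proof.
have Im_ip : complex.Im (ip a b) = rip a ('i *: b).
  by rewrite /rip ipZr; case: (ip a b) => p q /=; lra.
have nrm_i : nrm ('i *: b) = nrm b.
  by rewrite !hnormE /rip ipZl ipZr; congr Num.sqrt; case: (ip b b) => p q /=; lra.
apply: le_trans (cmod_le_Re_Im _) _; rewrite mulr2n mulrDl mul1r.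
by apply: lerD; [exact: cs_abs | rewrite Im_ip -nrm_i; exact: cs_abs].
Qed.

Lemma numrad_ub T : norm_bounded T ->
  forall z, nrm z = 1 -> cmod (ip (T z) z) <= numrad ip T.
Proof.
case=> M hM z hz; apply: ub_le_sup; last by exists z.
exists (2 * `|M|) => r [x [hx ->]].
apply: le_trans (cmod_ip_le _ _) _; rewrite hx mulr1 ler_wpM2l //.
by apply: le_trans (hM x) _; rewrite hx mulr1; exact: ler_norm.
Qed.

Lemma numrad_ge0 T : norm_bounded T -> 0 <= numrad ip T.
Proof.
move=> hT; have [[z hz]|nz] := pselect (exists z, nrm z = 1).
  by apply: le_trans (numrad_ub hT hz); apply: sqrtr_ge0.
rewrite /numrad (_ : [set r | _] = set0)%classic ?sup0 //.
by apply/seteqP; split => r //= [x [hx _]]; exfalso; apply: nz; exists x.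
Qed.

Lemma numrad_form_le P Q : linop P -> linop Q -> symmetric_op P ->
  norm_bounded (fun x => P (Q x)) ->
  forall z, rip (P z) (Q z) <= numrad ip (fun x => P (Q x)) * rip z z.
Proof.
move=> lP lQ sP bPQ; apply: bound_of_sphere.
  by move=> s z; rewrite linZ // linZ // ripZl ripZr mulrA expr2.
move=> z hz; rewrite sP ripC; apply: le_trans (Re_le_cmod _) _.
exact: numrad_ub.
Qed.

Lemma selfadjoint_symmetric T : selfadjoint ip T -> symmetric_op T.
Proof. by move=> h x y; rewrite /rip h. Qed.

(* Over C, an operator with <T x, x> >= 0 is symmetric: compare the
   imaginary parts of <T (x + i y), x + i y>, <T x, x> and <T y, y>. *)
Lemma positive_symmetric T : linop T -> (forall x, 0 <= ip (T x) x) ->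
  symmetric_op T.
Proof.
move=> lT pT x y.
have h := ger0_Im (pT (x + 'i *: y)).
rewrite (linD lT) (linZ lT) !ipDl !ipDr !ipZl !ipZr in h.
have hx := ger0_Im (pT x); have hy := ger0_Im (pT y).
rewrite (ripC x) /rip; move: h hx hy.
move: (ip (T x) x) (ip (T x) y) (ip (T y) x) (ip (T y) y).
by move=> [a1 a2] [b1 b2] [c1 c2] [d1 d2] /= h hx hy; lra.
Qed.

Lemma is_abs_props B P : selfadjoint ip B -> is_abs ip B P ->
  [/\ linop P, norm_bounded P, symmetric_op P, positive_op P
    & forall x, P (P x) = B (B x)].
Proof.
move=> hB [[lP bP] pP hP]; split => //.
- exact: positive_symmetric.
- by move=> x; have := pP x; rewrite /rip lecE => /andP[].
move=> x; apply/eqP; rewrite -subr_eq0; apply/eqP; apply: ip_self_eq0.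
by rewrite {1}ipBl hP -hB subrr.
Qed.

Lemma bounded_op_opp T : bounded_op ip T -> bounded_op ip (fun x => - T x).
Proof.
case=> lT [M hM]; split; first exact: linop_opp.
by exists M => x; rewrite hnormN.
Qed.

Lemma selfadjoint_opp T : selfadjoint ip T -> selfadjoint ip (fun x => - T x).
Proof. by move=> hT x y; rewrite ipNl ipNr hT. Qed.

Lemma is_abs_opp T P : is_abs ip T P -> is_abs ip (fun x => - T x) P.
Proof. by case=> bP pP hP; split => // x y; rewrite ipNl ipNr opprK hP. Qed.

Lemma sum_opnorm_sq_le B C P Q : bounded_op ip B -> bounded_op ip C ->
  selfadjoint ip B -> selfadjoint ip C -> is_abs ip B P -> is_abs ip C Q ->
  opnorm ip (fun x => B x + C x) ^+ 2
    <= opnorm ip (fun x => B (B x) + C (C x)) + 2 * numrad ip (fun x => P (Q x)).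
Proof.
move=> [lB bB] [lC bC] hB hC absP absQ.
have [lP bP sP pP PPBB] := is_abs_props hB absP.
have [lQ bQ sQ pQ QQCC] := is_abs_props hC absQ.
have [cP [cP0 fP]] := form_le_of_bounded bP.
have [cQ [cQ0 fQ]] := form_le_of_bounded bQ.
have bN : norm_bounded (fun x => B (B x) + C (C x)).
  by apply: norm_bounded_add; apply: norm_bounded_comp.
have bw : norm_bounded (fun x => P (Q x)) by apply: norm_bounded_comp.
have N0 := opnorm_ge0 bN; have w0 := numrad_ge0 bw.
apply: opnorm_sq_le; first by rewrite addr_ge0 ?mulr_ge0.
exact: (sum_norm_le lB (selfadjoint_symmetric hB) lC (selfadjoint_symmetric hC)
  lP sP pP lQ sQ pQ cP0 fP cQ0 fQ PPBB QQCC N0 w0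
  (opnorm_form_le (linop_add (linop_comp lB lB) (linop_comp lC lC)) bN)
  (numrad_form_le lP lQ sP bw)).
Qed.

End InnerProduct.

Unset Implicit Arguments.
Local Close Scope complex_scope.

(* Theorem: max (||B + C||^2, ||B - C||^2) <= ||B^2 + C^2|| + 2 w(|B| |C|).
   The bound for B - C is the bound for the sum B + (- C), since
   (- C)^2 = C^2 and |- C| = |C|. *)
Theorem mainTheorem14 (R : realType) (V : lmodType R[i]) (ip : V -> V -> R[i])
  (hip : is_inner_product ip) (hcomplete : complete_ip ip)
  (B C : V -> V)
  (hB : bounded_op ip B) (hC : bounded_op ip C)
  (sB : selfadjoint ip B) (sC : selfadjoint ip C)
  (absB absC : V -> V)
  (habsB : is_abs ip B absB) (habsC : is_abs ip C absC) :
  Num.max (opnorm ip (fun x => B x + C x) ^+ 2)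
          (opnorm ip (fun x => B x - C x) ^+ 2)
    <= opnorm ip (fun x => B (B x) + C (C x))
       + 2 * numrad ip (fun x => absB (absC x)).
Proof.
have sq_oppC : (fun x => B (B x) + - C (- C x)) = (fun x => B (B x) + C (C x)).
  by apply/funext => x; rewrite (linN hC.1) opprK.
rewrite ge_max; apply/andP; split; first exact: (sum_opnorm_sq_le hip).
rewrite -sq_oppC; apply: (sum_opnorm_sq_le hip) => //.
- exact: bounded_op_opp.
- exact: selfadjoint_opp.
- exact: is_abs_opp.
Qed.
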